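(* Let $\ell\ge 2$, let $G$ be an $n$-vertex graph with average degree $d>0$, and let $x_{i-1}y_{i-1}$ and $x_{i+1}y_{i+1}$ be vertex-disjoint edges of $G$ such that $(x_{i-1},y_{i-1},x_{i+1},y_{i+1})$ is not rich. Then $$\sum_{(x_i,y_i)}\frac{1}{\max\big(d(x_{i-1},y_i),\frac{d^2}{n}\big)\cdot \max\big(d(x_i,y_{i+1}),\frac{d^2}{n}\big)}\le 8\ell,$$ where the sum is over all pairs $(x_i,y_i)$ of vertices such that $x_{i-1},y_{i-1},x_i,y_i,x_{i+1},y_{i+1}$ are distinct and $x_iy_i,\ x_{i-1}x_i,\ x_ix_{i+1},\ y_{i-1}y_i,\ y_iy_{i+1}\in E(G)$ (i.e. these six vertices form a copy of $P_3^{\square}$).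
   Context: $d(a,b)$ denotes the number of common neighbours of $a,b$ in $G$. For distinct vertices $w,z,w',z'$, the $4$-tuple $(w,z,w',z')$ is rich if $wz,w'z'\in E(G)$ and there are at least $4\ell$ pairwise vertex-disjoint edges $xy\in E(G)$ with $wx,xw',zy,yz'\in E(G)$. *)

From mathcomp Require Import all_boot all_order all_algebra.
Set Implicit Arguments. Unset Strict Implicit. Unset Printing Implicit Defensive.
Import Order.TTheory GRing.Theory Num.Theory.

Definition simple_graph (T : finType) (e : rel T) : Prop :=
  symmetric e /\ irreflexive e.

Definition codeg (T : finType) (e : rel T) (a b : T) : nat :=
  #|[set c | e a c && e b c]|.

Definition deg (T : finType) (e : rel T) (v : T) : nat := #|[set c | e v c]|.

Definition avg_deg (R : realFieldType) (T : finType) (e : rel T) : R :=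
  ((\sum_(v : T) deg e v)%:R / #|T|%:R)%R.

Definition rich_witness (T : finType) (e : rel T) (w z w' z' : T)
    (M : {set T * T}) : Prop :=
  (forall p, p \in M -> [&& e p.1 p.2, e w p.1, e p.1 w', e z p.2 & e p.2 z'])
  /\ (forall p q, p \in M -> q \in M -> p != q ->
        [disjoint [set p.1; p.2] & [set q.1; q.2]]).

Definition rich (T : finType) (e : rel T) (l : nat) (w z w' z' : T) : Prop :=
  uniq [:: w; z; w'; z'] /\ e w z /\ e w' z' /\
  exists M : {set T * T}, rich_witness e w z w' z' M /\ 4 * l <= #|M|.

From mathcomp Require Import all_boot all_order all_algebra.
From mathcomp Require Import lra zify.
Set Implicit Arguments. Unset Strict Implicit.
Import Order.TTheory GRing.Theory Num.Theory.

(* Lemma 5.10.  Call p = (x_i, y_i) a middle rung between the edges xm ym and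
   xp yp when the six vertices are distinct and x_i y_i, xm x_i, x_i xp, ym y_i,
   y_i yp are edges; its weight is 1 / (max(d(xm,y_i), D) * max(d(x_i,yp), D))
   (the theorem uses D = d^2/n, but the argument works for every D).
   1. Both codegrees of a rung are at least 2, so its weight is at most
      1/(2 d(x_i,yp)) and at most 1/(2 d(xm,y_i)).
   2. The rungs with a fixed first vertex v are determined by their second
      vertex, a common neighbour of v and yp; so there are at most d(v,yp) of
      them and their weights sum to at most 1/2.  Symmetrically for a fixed
      second vertex.
   3. A maximal set M of pairwise disjoint rungs is a rich witness, so |M| < 4l
      as the 4-tuple is not rich; by maximality every rung has an endpoint among
      the at most 2|M| < 8l vertices covered by M.
   4. Charging each rung to its covered endpoints, the total weight is at most
      1/2 + 1/2 per covered vertex, hence less than 8l. *)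

Section Matchings.
Variable T : finType.

Definition matching (M : {set T * T}) : bool :=
  [forall p in M, forall q in M,
     (p != q) ==> [disjoint [set p.1; p.2] & [set q.1; q.2]]].

Definition covered (M : {set T * T}) : {set T} :=
  [set q.1 | q in M] :|: [set q.2 | q in M].

Lemma matchingP (M : {set T * T}) :
  reflect (forall p q, p \in M -> q \in M -> p != q ->
             [disjoint [set p.1; p.2] & [set q.1; q.2]])
          (matching M).
Proof.
apply: (iffP forall_inP) => [hM p q pM qM pq | hM p pM].
  by have /forall_inP/(_ q qM)/implyP := hM p pM; apply.
by apply/forall_inP => q qM; apply/implyP; apply: hM.
Qed.

Lemma card_covered (M : {set T * T}) : (#|covered M| <= 2 * #|M|)%N.
Proof.
apply: leq_trans (leq_card_setU _ _).1 _.
by rewrite mul2n -addnn leq_add // leq_imset_card.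
Qed.

Lemma endpoints_covered (M : {set T * T}) q :
  q \in M -> [set q.1; q.2] \subset covered M.
Proof.
by move=> qM; apply/subsetP => v; rewrite !inE => /orP[]/eqP->;
  rewrite imset_f ?orbT.
Qed.

Lemma matching_add (M : {set T * T}) p :
  matching M -> p.1 \notin covered M -> p.2 \notin covered M ->
  p \notin M /\ matching (p |: M).
Proof.
move=> /matchingP hM p1 p2.
have disj q : q \in M -> [disjoint [set p.1; p.2] & [set q.1; q.2]].
  move=> qM; apply: disjointWr (endpoints_covered qM) _.
  rewrite disjoint_subset; apply/subsetP => v.
  by rewrite in_set2 => /orP[]/eqP->; rewrite inE.
split; first by apply: contra p1 => pM;
  apply: (subsetP (endpoints_covered pM)); rewrite in_set2 eqxx.
apply/matchingP => a b; rewrite !in_setU1.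
case/orP=> [/eqP-> | aM] /orP[/eqP-> | bM] ab.
- by rewrite eqxx in ab.
- exact: disj.
- by rewrite disjoint_sym; apply: disj.
- exact: hM.
Qed.

(* Every set of pairs contains a matching covering an endpoint of each pair:
   take a matching of maximum size. *)
Lemma maximal_matching (S : {set T * T}) :
  exists2 M : {set T * T}, (M \subset S) && matching M &
    forall p, p \in S -> (p.1 \in covered M) || (p.2 \in covered M).
Proof.
have ok0 : (set0 \subset S) && matching set0.
  by rewrite sub0set; apply/matchingP => p q; rewrite inE.
case: (@arg_maxnP _ set0 (fun M => (M \subset S) && matching M)
                  (fun M => #|M|) ok0) => M /andP[MS hM] Mmax.
exists M; first by rewrite MS hM.
move=> p pS; apply: contraT; rewrite negb_or => /andP[p1 p2].
have [pM hpM] := matching_add hM p1 p2.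
have := Mmax (p |: M); rewrite cardsU1 pM subUset sub1set pS MS hpM.
by move/(_ isT); rewrite /= add1n ltnn.
Qed.

End Matchings.

Local Open Scope ring_scope.

Lemma sum_le_charge (R : numDomainType) (T : finType) (S : pred (T * T))
    (C : {set T}) (F : T * T -> R) :
  (forall p, S p -> 0 <= F p) ->
  (forall p, S p -> (p.1 \in C) || (p.2 \in C)) ->
  \sum_(p | S p) F p <=
  \sum_(v in C) (\sum_(p | S p && (p.1 == v)) F p +
                 \sum_(p | S p && (p.2 == v)) F p).
Proof.
move=> F0 cover.
have fibres (f : T * T -> T) :
    \sum_(v in C) \sum_(p | S p && (f p == v)) F p =
    \sum_(p | S p && (f p \in C)) F p.
  rewrite (partition_big f (mem C)) => [|p /andP[]//].
  apply: eq_bigr => v vC; apply: eq_bigl => p.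
  by case: eqP => [-> | _]; rewrite ?vC ?andbF ?andbT.
rewrite big_split /= !fibres !big_mkcondr -big_split /=.
apply: ler_sum => p Sp; have := cover p Sp; have := F0 p Sp.
by case: (p.1 \in C); case: (p.2 \in C) => //= F0p _;
  rewrite ?addr0 ?add0r // lerDl.
Qed.

Section Weights.
Variable R : realFieldType.
Implicit Types (D : R) (a b c k : nat).

Definition weight D a b : R := 1 / (Num.max a%:R D * Num.max b%:R D).

Lemma weightC D a b : weight D a b = weight D b a.
Proof. by rewrite /weight [X in 1 / X]mulrC. Qed.

Lemma weight_ge0 D a b : 0 <= weight D a b.
Proof. by rewrite divr_ge0 // mulr_ge0 // le_max ler0n. Qed.

(* Since max(a,D) >= a >= 2, the weight is at most 1/(2b). *)
Lemma weight_le D a b :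
  (2 <= a)%N -> (0 < b)%N -> weight D a b <= 1 / (2 * b%:R).
Proof.
move=> a2 b0; have a0 : (0 < a)%N by lia.
have le_max_l k : k%:R <= Num.max k%:R D by rewrite le_max lexx.
have max_gt0 k : (0 < k)%N -> 0 < Num.max k%:R D.
  by move=> k0; apply: lt_le_trans (le_max_l k); rewrite ltr0n.
rewrite /weight !div1r lef_pV2 ?posrE ?mulr_gt0 ?max_gt0 ?ltr0n //.
by apply: ler_pM => //; apply: le_trans (le_max_l a); rewrite ler_nat.
Qed.

Lemma sum_le_half (I : finType) (P : pred I) (F : I -> R) c :
  (#|P| <= c)%N -> (forall i, P i -> F i <= 1 / (2 * c%:R)) ->
  \sum_(i | P i) F i <= 1 / 2.
Proof.
move=> Pc Fc; apply: le_trans (ler_sum _ Fc) _.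
rewrite sumr_const -[_ *+ #|P|]mulr_natr.
case: c Pc {Fc} => [|c].
  by rewrite leqn0 => /eqP->; rewrite mulr0 divr_ge0.
move=> Pc; apply: le_trans (_ : 1 / (2 * c.+1%:R) * c.+1%:R <= _).
  by rewrite ler_wpM2l ?ler_nat ?divr_ge0 ?mulr_ge0.
by rewrite mul1r invfM divfK ?pnatr_eq0 ?mul1r.
Qed.

End Weights.

Section Rungs.
Variables (T : finType) (e : rel T) (xm ym xp yp : T).
Hypothesis esym : symmetric e.

Definition rung (p : T * T) : bool :=
  uniq [:: xm; ym; p.1; p.2; xp; yp] &&
  [&& e p.1 p.2, e xm p.1, e p.1 xp, e ym p.2 & e p.2 yp].

Lemma codeg_ge2 a b u v :
  u != v -> e a u -> e b u -> e a v -> e b v -> (2 <= codeg e a b)%N.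
Proof.
move=> uv au bu av bv.
have uv_common : [set u; v] \subset [set c | e a c && e b c].
  by apply/subsetP => c; rewrite !inE => /orP[]/eqP->; apply/andP.
by have := subset_leq_card uv_common; rewrite cards2 uv.
Qed.

(* For a rung, p.1 and ym are common neighbours of xm and p.2, while p.2 and
   xp are common neighbours of p.1 and yp. *)
Lemma rung_codeg_left p : e xm ym -> rung p -> (2 <= codeg e xm p.2)%N.
Proof.
move=> em /andP[u /and5P[e12 em1 _ em2 _]].
have ne : p.1 != ym by apply: contraTneq u => ->; rewrite /= !inE eqxx andbF.
by apply: codeg_ge2 ne em1 _ em _; rewrite esym.
Qed.

Lemma rung_codeg_right p : e xp yp -> rung p -> (2 <= codeg e p.1 yp)%N.
Proof.
move=> ep /andP[u /and5P[e12 _ e1p _ e2p]].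
have ne : p.2 != xp by apply: contraTneq u => ->; rewrite /= !inE eqxx !andbF.
by apply: codeg_ge2 ne e12 _ e1p _; rewrite esym.
Qed.

Variable R : realFieldType.
Variable D : R.

Definition rung_weight (p : T * T) : R :=
  weight D (codeg e xm p.2) (codeg e p.1 yp).

(* The rungs with first vertex v weigh at most 1/2 in total: their second
   vertices are distinct common neighbours of v and yp. *)
Lemma rungs_from_le_half v : e xm ym -> e xp yp ->
  \sum_(p | rung p && (p.1 == v)) rung_weight p <= 1 / 2.
Proof.
move=> em ep; apply: (sum_le_half (c := codeg e v yp)).
  rewrite -(card_in_imset (f := snd)); last first.
    by move=> [a b] [a' b'] /andP[_ /eqP/= ->] /andP[_ /eqP/= ->] /= ->.
  apply/subset_leq_card/subsetP => c /imsetP[p /andP[/andP[_ hp] /eqP v1] ->].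
  by case/and5P: hp => e12 _ _ _ e2p; rewrite inE -v1 e12 esym.
move=> p /andP[rp /eqP <-].
apply: weight_le; first exact: rung_codeg_left.
by have := rung_codeg_right ep rp; lia.
Qed.

Lemma rungs_to_le_half v : e xm ym -> e xp yp ->
  \sum_(p | rung p && (p.2 == v)) rung_weight p <= 1 / 2.
Proof.
move=> em ep; apply: (sum_le_half (c := codeg e xm v)).
  rewrite -(card_in_imset (f := fst)); last first.
    by move=> [a b] [a' b'] /andP[_ /eqP/= ->] /andP[_ /eqP/= ->] /= ->.
  apply/subset_leq_card/subsetP => c /imsetP[p /andP[/andP[_ hp] /eqP v2] ->].
  by case/and5P: hp => e12 em1 _ _ _; rewrite inE -v2 em1 esym.
move=> p /andP[rp /eqP <-]; rewrite /rung_weight weightC.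
apply: weight_le; first exact: rung_codeg_right.
by have := rung_codeg_left em rp; lia.
Qed.

(* A matching of rungs witnesses richness, so it has fewer than 4l rungs. *)
Lemma rung_matching_small (l : nat) (M : {set T * T}) :
  ~ rich e l xm ym xp yp -> uniq [:: xm; ym; xp; yp] -> e xm ym -> e xp yp ->
  M \subset [set p | rung p] -> matching M -> (#|M| < 4 * l)%N.
Proof.
move=> notrich uq em ep /subsetP MS /matchingP hM; rewrite ltnNge.
apply/negP => large; apply: notrich; do 3!split => //.
exists M; do 2!split => //.
by move=> p /MS; rewrite inE => /andP[_].
Qed.

(* The main estimate, for any D: charge every rung to the covered endpoints
   of a maximal matching of rungs. *)
Lemma rung_weights_le (l : nat) :
  ~ rich e l xm ym xp yp -> uniq [:: xm; ym; xp; yp] -> e xm ym -> e xp yp ->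
  \sum_(p | rung p) rung_weight p <= (8 * l)%:R.
Proof.
move=> notrich uq em ep.
have [M /andP[MS hM] cover] := maximal_matching [set p | rung p].
have Msmall := rung_matching_small notrich uq em ep MS hM.
have rung_cover p : rung p -> (p.1 \in covered M) || (p.2 \in covered M).
  by move=> rp; apply: cover; rewrite inE.
have weight_nneg p : rung p -> 0 <= rung_weight p.
  by move=> _; apply: weight_ge0.
apply: le_trans (sum_le_charge weight_nneg rung_cover) _.
apply: le_trans (ler_sum (G := fun _ => 1) _ _) _ => [v _ | ].
  by have := rungs_from_le_half v em ep; have := rungs_to_le_half v em ep; lra.
by rewrite sumr_const ler_nat; have := card_covered M; lia.
Qed.

End Rungs.

Theorem lemma5p10 (R : realFieldType) (T : finType) (e : rel T) (l : nat)
    (xm ym xp yp : T) :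
  simple_graph e ->
  (2 <= l)%N ->
  (0 < avg_deg R e)%R ->
  e xm ym -> e xp yp -> uniq [:: xm; ym; xp; yp] ->
  ~ rich e l xm ym xp yp ->
  let d := avg_deg R e in
  let n : R := (#|T|%:R)%R in
  (\sum_(p : T * T |
       uniq [:: xm; ym; p.1; p.2; xp; yp] &&
       [&& e p.1 p.2, e xm p.1, e p.1 xp, e ym p.2 & e p.2 yp])
     1 / (Num.max ((codeg e xm p.2)%:R) (d ^+ 2 / n) *
          Num.max ((codeg e p.1 yp)%:R) (d ^+ 2 / n))
   <= (8 * l)%:R)%R.
Proof.
move=> [esym _] _ _ em ep uq notrich.
exact: rung_weights_le.
Qed.
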